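(* Let $A$ be a locally-complex Cayley--Dickson algebra, let $I\in A$ with $\mathrm{tr}(I)=0$ and $\mathrm{n}(I)=1$, and let $f(x)\in A[x]$. Then for every $\lambda\in\mathbb{C}_I$ we have $f_I(\lambda)\in\mathbb{C}_I$ and $f_I^{\perp}(\lambda)\in\mathbb{C}_I^{\perp}$. Consequently, for $\lambda\in\mathbb{C}_I$, $f(\lambda)=0$ if and only if $f_I(\lambda)=f_I^{\perp}(\lambda)=0$.
   Context: Real Cayley--Dickson algebras: $A_0=\mathbb{R}$ with identity involution, $A_{k+1}=A_k\{\gamma_k\}=A_k\times A_k$ with product $(a,b)(c,d)=(ac+\gamma_k\bar d b,\ da+b\bar c)$ and involution $\overline{(a,b)}=(\bar a,-b)$. A real unital algebra is locally-complex if every non-real element generates a subalgebra isomorphic to $\mathbb{C}$ (for Cayley--Dickson algebras: all $\gamma_k=-1$ up to isomorphism). Trace $\mathrm{tr}(\lambda)=\lambda+\bar\lambda\in\mathbb{R}$, norm $\mathrm{n}(\lambda)=\bar\lambda\lambda\in\mathbb{R}$; $\langle\cdot,\cdot\rangle$ is the symmetric bilinear form with $\langle a,a\rangle=\mathrm{n}(a)$ (the Euclidean inner product). For $I$ with trace $0$ and norm $1$, $\mathbb{C}_I=\mathbb{R}+\mathbb{R}I\cong\mathbb{C}$, $\mathbb{C}_I^\perp=\{a\in A:\langle a,b\rangle=0\ \forall b\in\mathbb{C}_I\}$, and $\pi_I:A\to\mathbb{C}_I$ is the orthogonal projection. $A[x]=A\otimes_{\mathbb{R}}\mathbb{R}[x]$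 with central $x$; for $f(x)=\sum_k a_kx^k$ put $f_I(x)=\sum_k\pi_I(a_k)x^k$ and $f_I^\perp(x)=\sum_k(a_k-\pi_I(a_k))x^k$, so $f=f_I+f_I^\perp$; substitution $f(r)=\sum_k a_k(r^k)$. *)

From mathcomp Require Import all_boot all_order all_algebra.
From mathcomp Require Import reals.
Set Implicit Arguments. Unset Strict Implicit. Unset Printing Implicit Defensive.
Import Order.TTheory GRing.Theory Num.Theory.
Local Open Scope ring_scope.

Section CayleyDickson.
Variable R : realType.

Fixpoint CD (n : nat) : Type :=
  match n with 0 => R | m.+1 => (CD m * CD m)%type end.

Fixpoint cd_zero (n : nat) : CD n :=
  match n return CD n with 0 => 0 | m.+1 => (cd_zero m, cd_zero m) end.

Fixpoint cd_one (n : nat) : CD n :=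
  match n return CD n with 0 => 1 | m.+1 => (cd_one m, cd_zero m) end.

Fixpoint cd_add (n : nat) : CD n -> CD n -> CD n :=
  match n return CD n -> CD n -> CD n with
  | 0 => fun x y => x + y
  | m.+1 => fun x y => (cd_add x.1 y.1, cd_add x.2 y.2)
  end.

Fixpoint cd_opp (n : nat) : CD n -> CD n :=
  match n return CD n -> CD n with
  | 0 => fun x => - x
  | m.+1 => fun x => (cd_opp x.1, cd_opp x.2)
  end.

Fixpoint cd_scale (n : nat) (r : R) : CD n -> CD n :=
  match n return CD n -> CD n with
  | 0 => fun x => r * x
  | m.+1 => fun x => (cd_scale r x.1, cd_scale r x.2)
  end.

Fixpoint cd_conj (n : nat) : CD n -> CD n :=
  match n return CD n -> CD n with
  | 0 => fun x => x
  | m.+1 => fun x => (cd_conj x.1, cd_opp x.2)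
  end.

(* product with all gamma_k = -1 (locally-complex case):
   (a,b)(c,d) = (ac + gamma conj(d) b, d a + b conj(c)) *)
Fixpoint cd_mul (n : nat) : CD n -> CD n -> CD n :=
  match n return CD n -> CD n -> CD n with
  | 0 => fun x y => x * y
  | m.+1 => fun x y =>
      (cd_add (cd_mul x.1 y.1) (cd_scale (-1) (cd_mul (cd_conj y.2) x.2)),
       cd_add (cd_mul y.2 x.1) (cd_mul x.2 (cd_conj y.1)))
  end.

(* Euclidean inner product <.,.> (symmetric bilinear form with <a,a> = n(a)) *)
Fixpoint cd_ip (n : nat) : CD n -> CD n -> R :=
  match n return CD n -> CD n -> R with
  | 0 => fun x y => x * y
  | m.+1 => fun x y => cd_ip x.1 y.1 + cd_ip x.2 y.2
  end.

(* trace and norm as elements of A (they lie in R = R * 1) *)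
Definition cd_tr (n : nat) (x : CD n) : CD n := cd_add x (cd_conj x).
Definition cd_norm (n : nat) (x : CD n) : CD n := cd_mul (cd_conj x) x.

Definition in_CI (n : nat) (I x : CD n) : Prop :=
  exists r s : R, x = cd_add (cd_scale r (cd_one n)) (cd_scale s I).

Definition in_CI_perp (n : nat) (I x : CD n) : Prop :=
  forall b : CD n, in_CI I b -> cd_ip x b = 0.

(* orthogonal projection onto C_I (1 and I form an orthonormal basis of C_I
   when tr I = 0 and n(I) = 1) *)
Definition piI (n : nat) (I a : CD n) : CD n :=
  cd_add (cd_scale (cd_ip a (cd_one n)) (cd_one n)) (cd_scale (cd_ip a I) I).

Definition piI_perp (n : nat) (I a : CD n) : CD n :=
  cd_add a (cd_opp (piI I a)).

Fixpoint cd_pow (n : nat) (x : CD n) (k : nat) : CD n :=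
  match k with 0 => cd_one n | k'.+1 => cd_mul x (cd_pow x k') end.

(* polynomials in A[x] (central x) as coefficient lists [a_0; a_1; ...];
   substitution f(r) = sum_k a_k (r^k) *)
Fixpoint peval_from (n : nat) (s : seq (CD n)) (k : nat) (x : CD n) : CD n :=
  match s with
  | [::] => cd_zero n
  | a :: s' => cd_add (cd_mul a (cd_pow x k)) (peval_from s' k.+1 x)
  end.

Definition peval (n : nat) (f : seq (CD n)) (x : CD n) : CD n :=
  peval_from f 0 x.

Definition polyI (n : nat) (I : CD n) (f : seq (CD n)) : seq (CD n) :=
  map (piI I) f.
Definition polyI_perp (n : nat) (I : CD n) (f : seq (CD n)) : seq (CD n) :=
  map (piI_perp I) f.

End CayleyDickson.

(* With tr I = 0 and n(I) = 1 one gets conj I = -I, I * I = -1 and {1, I}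
   orthonormal, so C_I is a subalgebra stable under conjugation.  The
   Cayley--Dickson identity <x a, y> = <x, y conj a> then shows that right
   multiplication by an element of C_I maps C_I^perp into itself.  Hence for
   lam in C_I every term pi_I(a_k) lam^k of f_I(lam) lies in C_I and every term
   (a_k - pi_I(a_k)) lam^k of f_I^perp(lam) lies in C_I^perp.  Finally
   f(lam) = f_I(lam) + f_I^perp(lam), and C_I meets C_I^perp only in 0. *)

From HB Require Import structures.
From mathcomp Require Import all_boot all_order all_algebra.
From mathcomp Require Import boolp reals lra.
Import GRing.Theory Num.Theory.
Local Open Scope ring_scope.

Section CayleyDickson.
Set Implicit Arguments. Unset Strict Implicit.
Variable R : realType.
Implicit Types (n : nat) (r : R).

Lemma cd_addA n : associative (@cd_add R n).
Proof. by elim: n => [|n IH] x y z; rewrite /= ?addrA ?IH. Qed.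

Lemma cd_addC n : commutative (@cd_add R n).
Proof. by elim: n => [|n IH] x y; [exact: addrC | rewrite /= IH (IH x.2)]. Qed.

Lemma cd_add0 n : left_id (cd_zero R n) (@cd_add R n).
Proof. by elim: n => [|n IH] x; rewrite /= ?add0r // !IH; case: x. Qed.

Lemma cd_addN n : left_inverse (cd_zero R n) (@cd_opp R n) (@cd_add R n).
Proof. by elim: n => [|n IH] x; rewrite /= ?addNr // !IH. Qed.

HB.instance Definition _ n := gen_eqMixin (CD R n).
HB.instance Definition _ n := gen_choiceMixin (CD R n).
HB.instance Definition _ n :=
  GRing.isZmodule.Build (CD R n) (@cd_addA n) (@cd_addC n) (@cd_add0 n) (@cd_addN n).

Lemma cd_scaleA n r s (x : CD R n) : cd_scale r (cd_scale s x) = cd_scale (r * s) x.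
Proof. by elim: n x => [|n IH] x; rewrite /= ?mulrA ?IH. Qed.

Lemma cd_scale1 n (x : CD R n) : cd_scale 1 x = x.
Proof. by elim: n x => [|n IH] x; rewrite /= ?mul1r // !IH; case: x. Qed.

Lemma cd_scaleDr n r (x y : CD R n) :
  cd_scale r (cd_add x y) = cd_add (cd_scale r x) (cd_scale r y).
Proof. by elim: n x y => [|n IH] x y; rewrite /= ?mulrDr ?IH. Qed.

Lemma cd_scaleDl n (x : CD R n) r s :
  cd_scale (r + s) x = cd_add (cd_scale r x) (cd_scale s x).
Proof. by elim: n x => [|n IH] x; rewrite /= ?mulrDl ?IH. Qed.

HB.instance Definition _ n := GRing.Zmodule_isLmodule.Build R (CD R n)
  (@cd_scaleA n) (@cd_scale1 n) (@cd_scaleDr n) (@cd_scaleDl n).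

(* Locked copies of conjugation, product and inner product: the pair equations
   below match [(_, _)] up to conversion and would otherwise unfold them. *)
Fact cj_key : unit. Proof. exact: tt. Qed.
Fact ml_key : unit. Proof. exact: tt. Qed.
Fact ip_key : unit. Proof. exact: tt. Qed.
Definition cj n := locked_with cj_key (@cd_conj R n).
Definition ml n := locked_with ml_key (@cd_mul R n).
Definition ip n := locked_with ip_key (@cd_ip R n).

Lemma cd_conjE n : @cd_conj R n = @cj n. Proof. by rewrite /cj unlock. Qed.
Lemma cd_mulE n : @cd_mul R n = @ml n. Proof. by rewrite /ml unlock. Qed.
Lemma cd_ipE n : @cd_ip R n = @ip n. Proof. by rewrite /ip unlock. Qed.

Lemma cj_real (x : CD R 0) : cj x = x. Proof. by rewrite -cd_conjE. Qed.
Lemma ml_real (x y : CD R 0) : ml x y = (x : R) * y. Proof. by rewrite -cd_mulE. Qed.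
Lemma ip_real (x y : CD R 0) : ip x y = (x : R) * y. Proof. by rewrite -cd_ipE. Qed.

Section Pairs.
Variables (n : nat) (a b c d : CD R n).

Lemma pairD : ((a, b) : CD R n.+1) + (c, d) = (a + c, b + d). Proof. by []. Qed.
Lemma pairN : - ((a, b) : CD R n.+1) = (- a, - b). Proof. by []. Qed.
Lemma pairZ r : r *: ((a, b) : CD R n.+1) = (r *: a, r *: b). Proof. by []. Qed.
Lemma pair0 : (0 : CD R n.+1) = (0 : CD R n, 0 : CD R n). Proof. by []. Qed.
Lemma pair1 : cd_one R n.+1 = (cd_one R n, 0 : CD R n). Proof. by []. Qed.
Lemma cj_pair : cj ((a, b) : CD R n.+1) = (cj a, - b).
Proof. by rewrite -!cd_conjE. Qed.
Lemma ip_pair : ip ((a, b) : CD R n.+1) (c, d) = ip a c + ip b d.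
Proof. by rewrite -!cd_ipE. Qed.
Lemma ml_pair : ml ((a, b) : CD R n.+1) (c, d) =
  (ml a c - ml (cj d) b, ml d a + ml b (cj c)).
Proof.
by rewrite -!cd_mulE -!cd_conjE [LHS]/= -[cd_scale _ _]/((-1) *: _) scaleN1r.
Qed.

End Pairs.

Definition pairE := (pairD, pairN, pairZ, pair0, pair1, cj_pair, ip_pair, ml_pair).

Lemma cjD n (x y : CD R n) : cj (x + y) = cj x + cj y.
Proof.
elim: n x y => [|n IH] => [x y | [a b] [c d]]; first by rewrite !cj_real.
by rewrite !pairE IH opprD.
Qed.

Lemma cjZ n r (x : CD R n) : cj (r *: x) = r *: cj x.
Proof.
elim: n x => [|n IH] => [x | [a b]]; first by rewrite !cj_real.
by rewrite !pairE IH scalerN.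
Qed.

Lemma cjN n (x : CD R n) : cj (- x) = - cj x.
Proof. by rewrite -scaleN1r cjZ scaleN1r. Qed.

Lemma cj0 n : cj (0 : CD R n) = 0.
Proof. by rewrite -(scale0r (0 : CD R n)) cjZ !scale0r. Qed.

Lemma cj1 n : cj (cd_one R n) = cd_one R n.
Proof. by elim: n => [|n IH]; rewrite ?cj_real // !pairE IH oppr0. Qed.

Lemma cjK n : involutive (@cj n).
Proof.
elim: n => [|n IH] => [x | [a b]]; first by rewrite !cj_real.
by rewrite !pairE IH opprK.
Qed.

Lemma ml_additive n :
  (forall x y z : CD R n, ml (x + y) z = ml x z + ml y z) /\
  (forall x y z : CD R n, ml z (x + y) = ml z x + ml z y).
Proof.
elim: n => [|n [IHl IHr]]; first by split=> x y z; rewrite !ml_real ?mulrDl ?mulrDr.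
split=> [[a b] [c d] [e f] | [a b] [c d] [e f]];
  by rewrite !pairE ?cjD !IHl !IHr opprD; congr pair; rewrite addrACA.
Qed.

Lemma ml_scalable n r :
  (forall x y : CD R n, ml (r *: x) y = r *: ml x y) /\
  (forall x y : CD R n, ml x (r *: y) = r *: ml x y).
Proof.
elim: n => [|n [IHl IHr]].
  by split=> x y; rewrite !ml_real; [exact: esym (mulrA _ _ _) | exact: mulrCA].
by split=> [[a b] [c d] | [a b] [c d]];
  rewrite !pairE ?cjZ !IHl !IHr scalerBr scalerDr.
Qed.

Section Bilinear.
Variables (n : nat) (x y z : CD R n).

Lemma mlDl : ml (x + y) z = ml x z + ml y z. Proof. exact: (ml_additive n).1. Qed.
Lemma mlDr : ml z (x + y) = ml z x + ml z y. Proof. exact: (ml_additive n).2. Qed.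
Lemma mlZl r : ml (r *: x) y = r *: ml x y. Proof. exact: (ml_scalable n r).1. Qed.
Lemma mlZr r : ml x (r *: y) = r *: ml x y. Proof. exact: (ml_scalable n r).2. Qed.
End Bilinear.

Lemma mlNl n (x y : CD R n) : ml (- x) y = - ml x y.
Proof. by rewrite -scaleN1r mlZl scaleN1r. Qed.
Lemma mlNr n (x y : CD R n) : ml x (- y) = - ml x y.
Proof. by rewrite -scaleN1r mlZr scaleN1r. Qed.
Lemma ml0l n (x : CD R n) : ml 0 x = 0.
Proof. by rewrite -(scale0r (0 : CD R n)) mlZl !scale0r. Qed.
Lemma ml0r n (x : CD R n) : ml x 0 = 0.
Proof. by rewrite -(scale0r (0 : CD R n)) mlZr !scale0r. Qed.

Lemma ml1r n (x : CD R n) : ml x (cd_one R n) = x.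
Proof.
elim: n x => [|n IH] => [x | [a b]]; first by rewrite ml_real mulr1.
by rewrite !pairE IH cj1 cj0 !ml0l subr0 add0r IH.
Qed.

Lemma ml1l n (x : CD R n) : ml (cd_one R n) x = x.
Proof.
elim: n x => [|n IH] => [x | [a b]]; first by rewrite ml_real mul1r.
by rewrite !pairE IH ml0r ml0l subr0 addr0 ml1r.
Qed.

Lemma cjM n (x y : CD R n) : cj (ml x y) = ml (cj y) (cj x).
Proof.
elim: n x y => [|n IH] => [x y | [a b] [c d]].
  by rewrite !cj_real !ml_real mulrC.
rewrite !pairE cjD cjN !IH !cjK cjN !mlNl !mlNr opprK opprD.
by congr pair; rewrite addrC.
Qed.

Lemma ipDl n (x y z : CD R n) : ip (x + y) z = ip x z + ip y z.
Proof.
elim: n x y z => [|n IH] => [x y z | [a b] [c d] [e f]].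
  by rewrite !ip_real mulrDl.
by rewrite !pairE !IH addrACA.
Qed.

Lemma ipZl n r (x y : CD R n) : ip (r *: x) y = r * ip x y.
Proof.
elim: n x y => [|n IH] => [x y | [a b] [c d]].
  by rewrite !ip_real; exact: esym (mulrA _ _ _).
by rewrite !pairE !IH mulrDr.
Qed.

Lemma ipC n (x y : CD R n) : ip x y = ip y x.
Proof.
elim: n x y => [|n IH] => [x y | [a b] [c d]]; first by rewrite !ip_real mulrC.
by rewrite !pairE (IH a) (IH b).
Qed.

Lemma ipDr n (x y z : CD R n) : ip z (x + y) = ip z x + ip z y.
Proof. by rewrite ipC ipDl !(ipC z). Qed.

Lemma ipZr n r (x y : CD R n) : ip x (r *: y) = r * ip x y.
Proof. by rewrite ipC ipZl ipC. Qed.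

Lemma ipNl n (x y : CD R n) : ip (- x) y = - ip x y.
Proof. by rewrite -scaleN1r ipZl mulN1r. Qed.

Lemma ipNr n (x y : CD R n) : ip x (- y) = - ip x y.
Proof. by rewrite -scaleN1r ipZr mulN1r. Qed.

Lemma ip_cj n (x y : CD R n) : ip (cj x) (cj y) = ip x y.
Proof.
elim: n x y => [|n IH] => [x y | [a b] [c d]]; first by rewrite !cj_real.
by rewrite !pairE IH ipNl ipNr opprK.
Qed.

Lemma ip11 n : ip (cd_one R n) (cd_one R n) = 1.
Proof.
elim: n => [|n IH]; first by rewrite ip_real mulr1.
by rewrite !pairE IH -(scale0r (0 : CD R n)) ipZl mul0r addr0.
Qed.

Lemma ipxx_ge0 n (x : CD R n) : 0 <= ip x x.
Proof.
elim: n x => [|n IH] => [x | [a b]]; first by rewrite ip_real sqr_ge0.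
by rewrite !pairE addr_ge0.
Qed.

Lemma ipxx_eq0 n (x : CD R n) : ip x x = 0 -> x = 0.
Proof.
elim: n x => [|n IH] => [x | [a b]].
  by rewrite ip_real => /eqP; rewrite mulf_eq0 orbb => /eqP.
rewrite !pairE => /eqP; rewrite paddr_eq0 ?ipxx_ge0 //.
by case/andP=> /eqP/IH -> /eqP/IH ->.
Qed.

(* Conjugation exchanges the two adjunction identities, so the induction in
   [ipMr] only has to carry the right one. *)
Lemma ipMl_of_ipMr n :
    (forall a x y : CD R n, ip (ml x a) y = ip x (ml y (cj a))) ->
  forall a x y : CD R n, ip (ml a x) y = ip x (ml (cj a) y).
Proof. by move=> ipMr a x y; rewrite -ip_cj cjM ipMr -cjM ip_cj. Qed.

Lemma ipMr n (a x y : CD R n) : ip (ml x a) y = ip x (ml y (cj a)).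
Proof.
elim: n a x y => [|n IHr] => [a x y | [a1 a2] [x1 x2] [y1 y2]].
  by rewrite !ip_real !ml_real cj_real mulrAC mulrA.
have IHl := ipMl_of_ipMr IHr.
have e1 : ip (ml (cj a2) x2) y1 = ip x2 (ml a2 y1) by rewrite IHl cjK.
have e2 : ip (ml x2 (cj a1)) y2 = ip x2 (ml y2 a1) by rewrite IHr cjK.
rewrite !pairE !ipDl !ipNl IHr e1 IHl e2 cjN cjK !mlNl !ipDr !ipNr opprK.
by rewrite addrACA.
Qed.

Lemma cd_norm_ip n (x : CD R n) : cd_norm x = ip x x *: cd_one R n.
Proof.
rewrite /cd_norm cd_conjE cd_mulE.
elim: n x => [|n IH] => [x | [a b]].
  by rewrite ip_real ml_real cj_real; exact: esym (mulr1 _).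
by rewrite !pairE IH mlNr mlNl opprK IH subrr scalerDl scaler0.
Qed.

Lemma peval_from_cons n (a : CD R n) f k x :
  peval_from (a :: f) k x = ml a (cd_pow x k) + peval_from f k.+1 x.
Proof. by rewrite /= cd_mulE. Qed.

Lemma peval_from_split n (g h : CD R n -> CD R n) f k x :
    (forall a, g a + h a = a) ->
  peval_from f k x = peval_from (map g f) k x + peval_from (map h f) k x.
Proof.
move=> ghE; elim: f k => [|a f IH] k; first by rewrite addr0.
by rewrite !map_cons !peval_from_cons IH -{1}(ghE a) mlDl addrACA.
Qed.

Section ComplexLine.
Variables (n : nat) (I : CD R n).
Local Notation one := (cd_one R n).

Lemma in_CIP z : in_CI I z <-> exists r s, z = r *: one + s *: I.
Proof. by []. Qed.

Lemma in_CI_perpP z : in_CI_perp I z <-> forall w, in_CI I w -> ip z w = 0.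
Proof. by rewrite /in_CI_perp cd_ipE. Qed.

Lemma in_CI0 : in_CI I 0.
Proof. by apply/in_CIP; exists 0, 0; rewrite !scale0r addr0. Qed.

Lemma in_CI1 : in_CI I one.
Proof. by apply/in_CIP; exists 1, 0; rewrite scale0r addr0 scale1r. Qed.

Lemma in_CI_self : in_CI I I.
Proof. by apply/in_CIP; exists 0, 1; rewrite scale0r add0r scale1r. Qed.

Lemma in_CID u v : in_CI I u -> in_CI I v -> in_CI I (u + v).
Proof.
move=> /in_CIP[r1 [s1 ->]] /in_CIP[r2 [s2 ->]].
by apply/in_CIP; exists (r1 + r2), (s1 + s2); rewrite !scalerDl addrACA.
Qed.

Lemma in_CIZ r u : in_CI I u -> in_CI I (r *: u).
Proof.
move=> /in_CIP[r1 [s1 ->]].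
by apply/in_CIP; exists (r * r1), (r * s1); rewrite scalerDr !scalerA.
Qed.

Lemma piIE a : piI I a = ip a one *: one + ip a I *: I.
Proof. by rewrite /piI cd_ipE. Qed.

Lemma piI_perpE a : piI_perp I a = a - piI I a.
Proof. by []. Qed.

Lemma piI_add_perp a : piI I a + piI_perp I a = a.
Proof. by rewrite piI_perpE addrC subrK. Qed.

Lemma piI_in_CI a : in_CI I (piI I a).
Proof. by exists (cd_ip a one), (cd_ip a I). Qed.

Lemma in_CI_perp_basis z : ip z one = 0 -> ip z I = 0 -> in_CI_perp I z.
Proof.
move=> z1 zI; apply/in_CI_perpP => _ /in_CIP[r [s ->]].
by rewrite ipDr !ipZr z1 zI !mulr0 addr0.
Qed.

Lemma in_CI_perp0 : in_CI_perp I 0.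
Proof. by apply: in_CI_perp_basis; rewrite -(scale0r (0 : CD R n)) ipZl mul0r. Qed.

Lemma in_CI_perpD u v : in_CI_perp I u -> in_CI_perp I v -> in_CI_perp I (u + v).
Proof.
move=> /in_CI_perpP pu /in_CI_perpP pv; apply/in_CI_perpP => w Cw.
by rewrite ipDl pu ?pv ?addr0.
Qed.

Lemma in_CI_add_perp_eq0 u v :
  in_CI I u -> in_CI_perp I v -> u + v = 0 -> u = 0 /\ v = 0.
Proof.
move=> Cu /in_CI_perpP pv /eqP; rewrite addrC addr_eq0 => /eqP vE.
have Cv : in_CI I v by rewrite vE -scaleN1r; apply: in_CIZ.
have v0 : v = 0 by apply: ipxx_eq0; apply: pv.
by split=> //; rewrite -[u]opprK -vE v0 oppr0.
Qed.

Hypothesis trI : cd_tr I = cd_zero R n.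
Hypothesis normI : cd_norm I = one.

Lemma cjI : cj I = - I.
Proof.
move: trI; rewrite /cd_tr cd_conjE -[cd_add _ _]/(_ + _) => /eqP.
by rewrite addrC addr_eq0 => /eqP.
Qed.

Lemma mlII : ml I I = - one.
Proof. by rewrite -normI /cd_norm cd_mulE cd_conjE cjI mlNl opprK. Qed.

Lemma ipI1 : ip I one = 0.
Proof. by have := ip_cj I one; rewrite cjI cj1 ipNl; lra. Qed.

Lemma ipII : ip I I = 1.
Proof.
by have := congr1 (fun z => ip z one) normI; rewrite cd_norm_ip ipZl !ip11 mulr1.
Qed.

Lemma in_CI_cj u : in_CI I u -> in_CI I (cj u).
Proof.
move=> /in_CIP[r [s ->]]; rewrite cjD !cjZ cj1 cjI scalerN -scaleNr.
by apply: in_CID; apply: in_CIZ; [exact: in_CI1 | exact: in_CI_self].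
Qed.

Lemma in_CIM u v : in_CI I u -> in_CI I v -> in_CI I (ml u v).
Proof.
move=> /in_CIP[r1 [s1 ->]] /in_CIP[r2 [s2 ->]].
rewrite !(mlDl, mlDr, mlZl, mlZr) !ml1l ml1r mlII -scaleN1r.
by do !first [apply: in_CID | apply: in_CIZ | exact: in_CI1 | exact: in_CI_self].
Qed.

Lemma in_CI_pow x k : in_CI I x -> in_CI I (cd_pow x k).
Proof.
by move=> Cx; elim: k => [|k IH]; [exact: in_CI1 | rewrite /= cd_mulE; exact: in_CIM].
Qed.

Lemma in_CI_perpM b v : in_CI_perp I b -> in_CI I v -> in_CI_perp I (ml b v).
Proof.
move=> /in_CI_perpP pb Cv; apply/in_CI_perpP => w Cw.
by rewrite ipMr; apply/pb/in_CIM/in_CI_cj.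
Qed.

Lemma piI_perp_in_CI_perp a : in_CI_perp I (piI_perp I a).
Proof.
apply: in_CI_perp_basis; rewrite piI_perpE piIE ipDl ipNl ipDl !ipZl.
  by rewrite ip11 ipI1 mulr1 mulr0 addr0 subrr.
by rewrite (ipC one I) ipI1 ipII mulr1 mulr0 add0r subrr.
Qed.

Lemma peval_from_in_CI (g : CD R n -> CD R n) f k x :
  (forall a, in_CI I (g a)) -> in_CI I x -> in_CI I (peval_from (map g f) k x).
Proof.
move=> Cg Cx; elim: f k => [|a f IH] k; first exact: in_CI0.
by rewrite map_cons peval_from_cons; apply/in_CID/IH/in_CIM/in_CI_pow.
Qed.

Lemma peval_from_in_CI_perp (g : CD R n -> CD R n) f k x :
    (forall a, in_CI_perp I (g a)) -> in_CI I x ->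
  in_CI_perp I (peval_from (map g f) k x).
Proof.
move=> pg Cx; elim: f k => [|a f IH] k; first exact: in_CI_perp0.
by rewrite map_cons peval_from_cons; apply/in_CI_perpD/IH/in_CI_perpM/in_CI_pow.
Qed.

End ComplexLine.
End CayleyDickson.

Theorem proposition4p6 (R : realType) (n : nat) (I : CD R n) (f : seq (CD R n)) :
  cd_tr I = cd_zero R n ->
  cd_norm I = cd_one R n ->
  forall lam : CD R n, in_CI I lam ->
    [/\ in_CI I (peval (polyI I f) lam),
        in_CI_perp I (peval (polyI_perp I f) lam)
      & (peval f lam = cd_zero R n <->
         peval (polyI I f) lam = cd_zero R n /\
         peval (polyI_perp I f) lam = cd_zero R n)].
Proof.
move=> trI normI lam Clam.
have Cu : in_CI I (peval (polyI I f) lam).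
  exact: peval_from_in_CI (piI_in_CI I) Clam.
have pv : in_CI_perp I (peval (polyI_perp I f) lam).
  exact: peval_from_in_CI_perp (piI_perp_in_CI_perp trI normI) Clam.
split=> //; rewrite /peval (peval_from_split _ _ _ (piI_add_perp I)).
split=> [/(in_CI_add_perp_eq0 Cu pv) // | [-> ->]].
exact: addr0.
Qed.
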